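(* Let $\tau\subset\mathbb{Z}^4_{\ge0}$ be a B-facet which has an internal V-face consisting of exactly three (affinely independent) points. Then $\tau$ is a $B_1$-facet, or a $B_2$-facet, or the standard cross-polytope $\{(1,1,0,0),(1,0,1,0),(1,0,0,1),(0,1,1,0),(0,1,0,1),(0,0,1,1)\}$.
   Context: A polytope is a finite subset of $\mathbb{Z}^n$; its dimension is the dimension of its affine span; a face of a finite set $S$ is $S\cap G$ for a face $G$ of the convex hull of $S$. A $k$-simplex is a set of $k+1$ affinely independent points; a $k$-simplex $S\subset\mathbb{Z}^n_{\ge0}$ is a B-simplex if there is an index $i$ with exactly $k$ vertices in $\{x_i=0\}$ and the remaining vertex having $x_i=1$. A B-facet in $\mathbb{Z}^n_{\ge0}$ is a finite set $\tau\subset\mathbb{Z}^n_{\ge0}$ whose affine span is a hyperplane $\{\langle a,x\rangle=b\}$ with all $a_j>0$, such that every $(n-1)$-simplex with vertices in $\tau$ is a B-simplex. A face $F$ of $\tau$ is a V-face if it is contained in a coordinate subspace (linear span of some standard basis vectors) of dimension $\dim F+1$; a V-face $F$ is internal if no nonempty proper face of $F$ is a V-face. $\tau\subset\mathbb{Z}^4_{\ge0}$ is a $B_1$-facet if there is an index $i$ such that exactly one point of $\tau$ has nonzero $x_i$, and it has $x_i=1$; it is a $B_2$-facet if there are distinct indices $i,j$ with $(x_i,x_j)\in\{(0,0),(1,0),(0,1)\}$ for all $x\in\tau$. *)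

From HB Require Import structures.
From mathcomp Require Import all_boot all_order all_algebra.
From mathcomp Require Import finmap.
From mathcomp Require Import reals.
Set Implicit Arguments. Unset Strict Implicit. Unset Printing Implicit Defensive.
Import Order.TTheory GRing.Theory Num.Theory.
Local Open Scope ring_scope.
Local Open Scope fset_scope.

Definition pt (n : nat) := {ffun 'I_n -> nat}.

Section Geometry.
Variables (R : realType) (n : nat).

Definition coord (x : pt n) (i : 'I_n) : R := ((x i)%:R : R).

Definition dotp (c : 'I_n -> R) (x : pt n) : R := \sum_(i < n) c i * coord x i.

Definition aff_indep (A : {fset pt n}) : Prop :=
  forall l : pt n -> R,
    \sum_(x <- A) l x = 0 ->
    (forall i, \sum_(x <- A) l x * coord x i = 0) ->
    forall x, x \in A -> l x = 0.

Definition in_aff_span (A : {fset pt n}) (y : 'I_n -> R) : Prop :=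
  exists l : pt n -> R,
    \sum_(x <- A) l x = 1 /\ forall i, y i = \sum_(x <- A) l x * coord x i.

Definition has_dim (A : {fset pt n}) (k : nat) : Prop :=
  (exists2 B : {fset pt n}, B `<=` A & aff_indep B /\ #|` B| = k.+1) /\
  (forall B : {fset pt n}, B `<=` A -> aff_indep B -> (#|` B| <= k.+1)%N).

Definition simplex (S : {fset pt n}) (k : nat) : Prop :=
  aff_indep S /\ #|` S| = k.+1.

Definition B_simplex (S : {fset pt n}) (k : nat) : Prop :=
  simplex S k /\
  exists i : 'I_n,
    #|` [fset x in S | x i == 0%N]| = k /\
    forall x, x \in S -> x i != 0%N -> x i = 1%N.

Definition B_facet (tau : {fset pt n}) : Prop :=
  (exists (a : 'I_n -> R) (b : R),
      (forall j, 0 < a j) /\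
      forall y : 'I_n -> R, in_aff_span tau y <-> \sum_(j < n) a j * y j = b) /\
  (forall S : {fset pt n}, S `<=` tau -> simplex S n.-1 -> B_simplex S n.-1).

(* F is a face of the finite set S: F = S \cap G for a face G of conv(S);
   faces of a polytope are its intersections with supporting hyperplanes
   <c,x> = d (c = 0 allowed, giving the whole polytope / the empty face). *)
Definition is_face (S F : {fset pt n}) : Prop :=
  exists (c : 'I_n -> R) (d : R),
    (forall x, x \in S -> dotp c x <= d) /\
    F = [fset x in S | dotp c x == d].

Definition is_Vface (tau F : {fset pt n}) : Prop :=
  is_face tau F /\
  exists k : nat, has_dim F k /\
    exists J : {set 'I_n}, #|J| = k.+1 /\
      forall x, x \in F -> forall i, i \notin J -> x i = 0%N.

Definition is_internal_Vface (tau F : {fset pt n}) : Prop :=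
  is_Vface tau F /\
  forall G : {fset pt n}, is_face F G -> G != fset0 -> G != F -> ~ is_Vface tau G.

End Geometry.

Definition B1_facet (tau : {fset pt 4}) : Prop :=
  exists i : 'I_4, exists2 v, v \in tau &
    v i = 1%N /\ forall x, x \in tau -> x != v -> x i = 0%N.

Definition B2_facet (tau : {fset pt 4}) : Prop :=
  exists i j : 'I_4, i != j /\
    forall x, x \in tau ->
      (x i, x j) \in [:: (0, 0); (1, 0); (0, 1)]%N.

Definition mkpt4 (a b c d : nat) : pt 4 :=
  [ffun i : 'I_4 => nth 0%N [:: a; b; c; d] i].

Definition cross_polytope : {fset pt 4} :=
  [fset mkpt4 1 1 0 0; mkpt4 1 0 1 0; mkpt4 1 0 0 1;
        mkpt4 0 1 1 0; mkpt4 0 1 0 1; mkpt4 0 0 1 1].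

From Pilot Require Import Defs.
From HB Require Import structures.
From mathcomp Require Import all_boot all_order all_algebra.
From mathcomp Require Import finmap.
From mathcomp Require Import reals.
From mathcomp Require Import ring lra.
From Stdlib Require Import Classical.
Set Implicit Arguments. Unset Strict Implicit. Unset Printing Implicit Defensive.
Import Order.TTheory GRing.Theory Num.Theory.
Local Open Scope fset_scope.
Local Open Scope ring_scope.

(* Let F = {u, v, w} be the internal V-face and l a coordinate vanishing on F.
   Internality forbids any other coordinate from vanishing at two points of F,
   or at two coordinates of one point of F: that edge or vertex would be a
   V-face.  The B-simplex F + p shows that every point p of tau off F has
   p_l = 1, and the points of tau with x_l = 0 lie in F.  For two points p, q
   off F, the B-simplices through p, q and an edge of F force a common zero
   coordinate i <> l of p and q on which F takes values in {0, 1}.  If tau has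
   a single point off F it is a B_1-facet; if all points off F share such a
   zero coordinate i it is a B_2-facet for (i, l); otherwise three points off F
   pairwise share three different zero coordinates, and the hyperplane equation
   forces all weights on these coordinates to be equal and tau to be the
   cross-polytope. *)

Lemma ord4_cases (i j k l x : 'I_4) :
  i != j -> i != k -> i != l -> j != k -> j != l -> k != l ->
  [|| x == i, x == j, x == k | x == l].
Proof.
move=> ij ik il jk jl kl; apply/negPn/negP => x_out.
have : (#|x |: (i |: (j |: (k |: [set l])))| <= 4)%N.
  by have := max_card (x |: (i |: (j |: (k |: [set l])))); rewrite card_ord.
rewrite !cardsU1 cards1 !inE.
move: x_out; rewrite !negb_or => /and4P[xi xj xk xl].
by rewrite xi xj xk xl ij ik il jk jl kl.
Qed.

Ltac ord4_witness tac := solve [exists (@Ordinal 4 0 isT); tac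
  | exists (@Ordinal 4 1 isT); tac | exists (@Ordinal 4 2 isT); tac
  | exists (@Ordinal 4 3 isT); tac].

Lemma ord4_two_others (l m : 'I_4) : l != m ->
  exists j k : 'I_4, [/\ j != k, j != l, j != m, k != l & k != m].
Proof.
by case: l => [[|[|[|[|?]]]] ?] //; case: m => [[|[|[|[|?]]]] ?] //= _;
  ord4_witness ltac:(ord4_witness done).
Qed.

Lemma ord4_other (l m j : 'I_4) : l != m -> l != j -> m != j ->
  exists k : 'I_4, [/\ k != l, k != m & k != j].
Proof.
by case: l => [[|[|[|[|?]]]] ?] //; case: m => [[|[|[|[|?]]]] ?] //;
  case: j => [[|[|[|[|?]]]] ?] //= _ _ _; ord4_witness done.
Qed.

Lemma big_ord4 (T : Type) (idx : T) (op : Monoid.com_law idx) (f : 'I_4 -> T)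
    (i j k l : 'I_4) :
  i != j -> i != k -> i != l -> j != k -> j != l -> k != l ->
  \big[op/idx]_m f m = op (f i) (op (f j) (op (f k) (f l))).
Proof.
move=> ij ik il jk jl kl.
rewrite (perm_big [:: i; j; k; l]) ?big_cons ?big_nil ?Monoid.mulm1 //.
apply: uniq_perm; first exact: index_enum_uniq.
  by rewrite /= !inE !negb_or ij ik il jk jl kl.
by move=> x; rewrite mem_index_enum !inE ord4_cases.
Qed.

Section SmallFsets.
Variable K : choiceType.

Definition fset2 (x y : K) : {fset K} := x |` [fset y].
Definition fset3 (x y z : K) : {fset K} := x |` fset2 y z.
Definition fset4 (x y z s : K) : {fset K} := x |` fset3 y z s.

Lemma in_fset2 t x y : (t \in fset2 x y) = (t == x) || (t == y).
Proof. by rewrite !inE. Qed.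

Lemma in_fset3 t x y z : (t \in fset3 x y z) = [|| t == x, t == y | t == z].
Proof. by rewrite !inE. Qed.

Lemma in_fset4 t x y z s :
  (t \in fset4 x y z s) = [|| t == x, t == y, t == z | t == s].
Proof. by rewrite !inE. Qed.

Lemma fset4_swap12 x y z s : fset4 x y z s = fset4 y x z s.
Proof. by apply/fsetP => t; rewrite !in_fset4; case: (t == x); case: (t == y). Qed.

Lemma in_fset_filter (A : {fset K}) (P : pred K) x :
  (x \in [fset t in A | P t]) = (x \in A) && P x.
Proof. by rewrite !inE. Qed.

Section BigFsets.
Variables (T : Type) (idx : T) (op : Monoid.com_law idx) (f : K -> T).

Lemma big_fset2 x y : x != y -> \big[op/idx]_(t <- fset2 x y) f t = op (f x) (f y).
Proof. by move=> xy; rewrite /fset2 big_fsetU1 ?big_seq_fset1 // inE. Qed.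

Lemma big_fset3 x y z : x != y -> x != z -> y != z ->
  \big[op/idx]_(t <- fset3 x y z) f t = op (f x) (op (f y) (f z)).
Proof.
by move=> xy xz yz; rewrite /fset3 big_fsetU1 ?big_fset2 // in_fset2 negb_or xy xz.
Qed.

Lemma big_fset4 x y z s :
  x != y -> x != z -> x != s -> y != z -> y != s -> z != s ->
  \big[op/idx]_(t <- fset4 x y z s) f t = op (f x) (op (f y) (op (f z) (f s))).
Proof.
by move=> *; rewrite /fset4 big_fsetU1 ?big_fset3 // in_fset3 !negb_or; apply/and3P.
Qed.

End BigFsets.

Lemma card_fset4_filter (P : pred K) x y z s :
  x != y -> x != z -> x != s -> y != z -> y != s -> z != s ->
  #|` [fset t in fset4 x y z s | P t]| = (P x + P y + P z + P s)%N.
Proof.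
move=> *; rewrite card_fset_sum1 -big_fset_condE big_mkcond big_fset4 //=.
by case: (P x); case: (P y); case: (P z); case: (P s).
Qed.

Lemma card_fset4 x y z s :
  x != y -> x != z -> x != s -> y != z -> y != s -> z != s ->
  #|` fset4 x y z s| = 4%N.
Proof.
move=> xy xz xs yz ys zs; rewrite /fset4 /fset3 /fset2 !cardfsU1 cardfs1 !inE.
by rewrite (negbTE zs) (negbTE yz) (negbTE ys) (negbTE xy) (negbTE xz) (negbTE xs).
Qed.

Lemma fset3_of_card3 (A : {fset K}) : #|` A| = 3%N ->
  exists u v w, [/\ A = fset3 u v w, u != v, u != w & v != w].
Proof.
move=> cA.
have [u uA] : exists u, u \in A by apply/fset0Pn; rewrite -cardfs_gt0 cA.
have cAu : #|` A `\ u| = 2%N by move: cA; rewrite (cardfsD1 u A) uA => -[].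
have [v vA] : exists v, v \in A `\ u by apply/fset0Pn; rewrite -cardfs_gt0 cAu.
have /cardfs1P[w Ew] : #|` (A `\ u) `\ v| == 1%N.
  by move: cAu; rewrite (cardfsD1 v (A `\ u)) vA => -[<-].
have : w \in (A `\ u) `\ v by rewrite Ew inE.
move: (vA); rewrite !inE => /andP[vu _] /andP[wv /andP[wu _]].
exists u, v, w; split; last by rewrite eq_sym.
- by rewrite /fset3 /fset2 -Ew !fsetD1K.
- by rewrite eq_sym.
- by rewrite eq_sym.
Qed.

End SmallFsets.

Lemma cardfsU1_le (K : choiceType) (A : {fset K}) x n :
  (#|` A| <= n)%N -> (#|` A `|` [fset x]| <= n.+1)%N.
Proof. by move=> le_An; rewrite cardfsU cardfs1 addn1 (leq_trans (leq_subr _ _)). Qed.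

Section Coordinates.
Variables (R : realType) (n : nat).
Local Notation coord := (Defs.coord R).

Lemma coord_ge0 (x : pt n) i : 0 <= coord x i.
Proof. by rewrite /Defs.coord ler0n. Qed.

Lemma coord_eq0 (x : pt n) i : (coord x i == 0) = (x i == 0%N).
Proof. by rewrite /Defs.coord pnatr_eq0. Qed.

Lemma coord_nat (x : pt n) i k : x i = k -> coord x i = k%:R.
Proof. by rewrite /Defs.coord => ->. Qed.

Lemma eq_coord_nat (x : pt n) i k : coord x i = k%:R -> x i = k.
Proof. by rewrite /Defs.coord => /eqP; rewrite eqr_nat => /eqP. Qed.

Lemma coord_inj (x y : pt n) : (forall i, coord x i = coord y i) -> x = y.
Proof. by move=> exy; apply/ffunP => i; apply/eqP; rewrite -(eqr_nat R); apply/eqP/exy. Qed.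

Lemma coord_neq (x y : pt n) : x != y -> exists i, coord x i != coord y i.
Proof.
move=> xy; apply/existsP; apply: contraR xy => /existsPn exy.
by apply/eqP/coord_inj => i; apply/eqP; have := exy i; rewrite negbK.
Qed.

Lemma dotpD (c1 c2 : 'I_n -> R) x :
  dotp (fun i => c1 i + c2 i) x = dotp c1 x + dotp c2 x.
Proof. by rewrite /dotp -big_split; apply: eq_bigr => i _; rewrite mulrDl. Qed.

Lemma dotp_le0 (c : 'I_n -> R) x : (forall i, c i <= 0) -> dotp c x <= 0.
Proof.
by move=> c_le0; apply: sumr_le0 => i _; apply: mulr_le0_ge0 => //; apply: coord_ge0.
Qed.

Lemma aff_indep1 (x : pt n) : aff_indep R [fset x].
Proof. by move=> f sum_f0 _ t; rewrite inE => /eqP ->; rewrite big_seq_fset1 in sum_f0. Qed.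

Lemma aff_indep2 (x y : pt n) : x != y -> aff_indep R (fset2 x y).
Proof.
move=> xy f sum_f0 comb_f0; rewrite big_fset2 //= in sum_f0.
have [i Hi] := coord_neq xy.
have fy : f y = - f x by apply/eqP; rewrite -subr_eq0 opprK addrC sum_f0.
have /eqP : f x * (coord x i - coord y i) = 0.
  by rewrite mulrBr -(comb_f0 i) big_fset2 // fy mulNr.
rewrite mulf_eq0 subr_eq0 (negbTE Hi) orbF => /eqP fx.
by move=> t; rewrite in_fset2 => /orP[] /eqP ->; rewrite ?fy fx ?oppr0.
Qed.

Lemma aff_indep3P (x y z : pt n) :
  x != y -> x != z -> y != z -> aff_indep R (fset3 x y z) ->
  forall l1 l2 l3 : R, l1 + l2 + l3 = 0 ->
  (forall i, l1 * coord x i + l2 * coord y i + l3 * coord z i = 0) ->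
  [/\ l1 = 0, l2 = 0 & l3 = 0].
Proof.
move=> xy xz yz indep l1 l2 l3 sum0 comb0.
pose f t := if t == x then l1 else if t == y then l2 else l3.
have [yx zx zy] : [/\ (y == x) = false, (z == x) = false & (z == y) = false].
  by split; apply/negbTE; rewrite eq_sym.
have sum_f : \sum_(t <- fset3 x y z) f t = 0.
  by rewrite big_fset3 //= /f eqxx yx zx zy eqxx addrA.
have comb_f : forall i, \sum_(t <- fset3 x y z) f t * coord t i = 0.
  by move=> i; rewrite big_fset3 //= /f eqxx yx zx zy eqxx addrA.
have f0 := indep f sum_f comb_f; split.
- by have := f0 x; rewrite in_fset3 eqxx /f eqxx => ->.
- by have := f0 y; rewrite in_fset3 eqxx orbT /f yx eqxx => ->.
- by have := f0 z; rewrite in_fset3 eqxx !orbT /f zx zy => ->.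
Qed.

Lemma aff_indep4I (x y z s : pt n) :
  x != y -> x != z -> x != s -> y != z -> y != s -> z != s ->
  (forall l1 l2 l3 l4 : R, l1 + l2 + l3 + l4 = 0 ->
    (forall i, l1 * coord x i + l2 * coord y i + l3 * coord z i + l4 * coord s i = 0) ->
    [/\ l1 = 0, l2 = 0, l3 = 0 & l4 = 0]) ->
  aff_indep R (fset4 x y z s).
Proof.
move=> xy xz xs yz ys zs indep f sum0 comb0.
rewrite big_fset4 //= !addrA in sum0.
have [|f1 f2 f3 f4] := indep _ _ _ _ sum0.
  by move=> i; have := comb0 i; rewrite big_fset4 //= !addrA.
by move=> t; rewrite in_fset4 => /or4P[] /eqP ->.
Qed.

Lemma has_dim_fset1 (x : pt n) : has_dim R [fset x] 0.
Proof.
split; first by exists [fset x] => //; split; [exact: aff_indep1 | rewrite cardfs1].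
by move=> B /fsubset_leq_card le_B _; rewrite (leq_trans le_B) // cardfs1.
Qed.

Lemma has_dim_fset2 (x y : pt n) : x != y -> has_dim R (fset2 x y) 1.
Proof.
have card2 : x != y -> #|` fset2 x y| = 2%N.
  by move=> xy; rewrite /fset2 cardfsU1 cardfs1 inE xy.
move=> xy; split.
  by exists (fset2 x y) => //; split; [exact: aff_indep2 | exact: card2].
by move=> B /fsubset_leq_card le_B _; rewrite (leq_trans le_B) // card2.
Qed.

End Coordinates.

Lemma mulmx_ker0_onto (F : fieldType) n (M : 'M[F]_n) :
  (forall x : 'rV_n, x *m M = 0 -> x = 0) -> forall y : 'rV_n, exists x, y = x *m M.
Proof.
move=> ker0 y.
have : row_free M.
  rewrite -kermx_eq0; apply/eqP/row_matrixP => i; rewrite row0; apply: ker0.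
  by rewrite -row_mul mulmx_ker row0.
by rewrite row_free_unit => uM; exists (y *m invmx M); rewrite mulmxKV.
Qed.

Lemma sum_ord4 (V : nmodType) (f : 'I_4 -> V) (i j k l : 'I_4) :
  i != j -> i != k -> i != l -> j != k -> j != l -> k != l ->
  \sum_m f m = f i + f j + f k + f l.
Proof. by move=> *; rewrite (@big_ord4 _ _ _ f i j k l) //= !addrA. Qed.

Lemma mem_cross_polytope (t : pt 4) i j k l :
  i != j -> i != k -> i != l -> j != k -> j != l -> k != l ->
  (t i <= 1)%N -> (t j <= 1)%N -> (t k <= 1)%N -> (t l <= 1)%N ->
  (t i + t j + t k + t l = 2)%N -> t \in cross_polytope.
Proof.
move=> ij ik il jk jl kl ti tj tk tl sum2.
pose o0 : 'I_4 := ord0; pose o1 : 'I_4 := @Ordinal 4 1 isT.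
pose o2 : 'I_4 := @Ordinal 4 2 isT; pose o3 : 'I_4 := @Ordinal 4 3 isT.
have [o01 o02 o03] : [/\ o0 != o1, o0 != o2 & o0 != o3] by [].
have [o12 o13 o23] : [/\ o1 != o2, o1 != o3 & o2 != o3] by [].
have t01 m : t m = 0%N \/ t m = 1%N.
  have : (t m <= 1)%N by case/or4P: (ord4_cases m ij ik il jk jl kl) => /eqP ->.
  by case: (t m) => [|[|]]; auto.
have : (\sum_(m < 4) t m = t i + (t j + (t k + t l)))%N.
  by rewrite (@big_ord4 _ _ _ (fun m => t m) i j k l).
rewrite !addnA sum2 => sum_t.
have -> : t = mkpt4 (t o0) (t o1) (t o2) (t o3).
  apply/ffunP => m; rewrite ffunE.
  by case/or4P: (ord4_cases m o01 o02 o03 o12 o13 o23) => /eqP ->.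
move: sum_t; rewrite (@big_ord4 _ _ _ (fun m => t m) o0 o1 o2 o3) //.
case: (t01 o0) => ->; case: (t01 o1) => ->; case: (t01 o2) => ->;
  case: (t01 o3) => -> //= _; by rewrite /cross_polytope !inE eqxx ?orbT.
Qed.

Lemma card_cross_polytope : (#|` cross_polytope| <= 6)%N.
Proof. by rewrite /cross_polytope; do 5! apply: cardfsU1_le; rewrite cardfs1. Qed.

Section InternalTriangle.
Variable R : realType.
Local Notation coord := (Defs.coord R).
Variable tau : {fset pt 4}.
Variables (a : 'I_4 -> R) (b : R).
Hypothesis a_gt0 : forall j, 0 < a j.
Hypothesis tau_span :
  forall y : 'I_4 -> R, in_aff_span tau y <-> \sum_(j < 4) a j * y j = b.
Hypothesis tau_B :
  forall S : {fset pt 4}, S `<=` tau -> simplex R S 3 -> B_simplex R S 3.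
Variables u v w : pt 4.
Hypotheses (uv : u != v) (uw : u != w) (vw : v != w).
Local Notation F := (fset3 u v w).
Variables (cF : 'I_4 -> R) (dF : R).
Hypothesis cF_le : forall x, x \in tau -> dotp cF x <= dF.
Hypothesis F_eq : F = [fset x in tau | dotp cF x == dF].
Variable l : 'I_4.
Hypothesis F_l0 : forall x, x \in F -> x l = 0%N.
Hypothesis F_indep : aff_indep R F.
Hypothesis F_internal : forall G : {fset pt 4},
  is_face R F G -> G != fset0 -> G != F -> ~ is_Vface R tau G.

Lemma mem_F x : (x \in F) = (x \in tau) && (dotp cF x == dF).
Proof. by rewrite [in LHS]F_eq !inE. Qed.

Lemma F_tau x : x \in F -> x \in tau.
Proof. by rewrite mem_F => /andP[]. Qed.

Lemma dotp_F x : x \in F -> dotp cF x = dF.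
Proof. by rewrite mem_F => /andP[_ /eqP]. Qed.

Lemma coord_F_l x : x \in F -> coord x l = 0.
Proof. by move=> xF; rewrite /Defs.coord F_l0. Qed.

Lemma uF : u \in F. Proof. by rewrite in_fset3 eqxx. Qed.
Lemma vF : v \in F. Proof. by rewrite in_fset3 eqxx orbT. Qed.
Lemma wF : w \in F. Proof. by rewrite in_fset3 eqxx !orbT. Qed.

Lemma dotp_tau x : x \in tau -> dotp a x = b.
Proof.
have sum_delta (f : pt 4 -> R) : x \in tau ->
    \sum_(t <- tau) (t == x)%:R * f t = f x.
  move=> xt; rewrite (big_fsetD1 x) //= eqxx mul1r big1_fset ?addr0 // => t.
  by rewrite !inE => /andP[/negbTE -> _]; rewrite mul0r.
move=> xt; apply/tau_span; exists (fun t => (t == x)%:R); split.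
  by rewrite -[RHS](sum_delta (fun=> 1)) //; apply: eq_bigr => t _; rewrite mulr1.
by move=> i; rewrite sum_delta.
Qed.

Lemma dotp_a_F x : x \in F -> dotp a x = b.
Proof. by move/F_tau/dotp_tau. Qed.

Lemma b_gt0 : 0 < b.
Proof.
have dotp_a_ge0 x : 0 <= dotp a x.
  by apply: sumr_ge0 => i _; apply: mulr_ge0; [exact: ltW | exact: coord_ge0].
rewrite lt_def -(dotp_a_F uF) dotp_a_ge0 andbT; apply/eqP => b0.
have dotp0 x : dotp a x = 0 -> forall i, coord x i = 0.
  move=> ax0 i; have /eqP : a i * coord x i = 0.
    apply: (@psumr_eq0P _ _ _ (fun i => a i * coord x i) _ ax0 i isT) => k _.
    by apply: mulr_ge0; [exact: ltW | exact: coord_ge0].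
  by rewrite mulf_eq0 (negbTE (lt0r_neq0 (a_gt0 i))) => /eqP.
move/negP: uv; apply; apply/eqP/(coord_inj (R := R)) => i.
by rewrite (dotp0 u b0 i) (dotp0 v _ i) // (dotp_a_F vF) -b0 (dotp_a_F uF).
Qed.

Definition vertices x y z :=
  [/\ x \in F, y \in F, z \in F & [/\ x != y, x != z & y != z]].

Lemma verticesE x y z : vertices x y z -> F = fset3 x y z.
Proof.
case=> xF yF zF [xy xz yz]; apply/fsetP => t; rewrite !in_fset3.
move: xF yF zF xy xz yz; rewrite !in_fset3.
case/or3P=> /eqP-> ; case/or3P=> /eqP->; case/or3P=> /eqP->;
  rewrite ?eqxx //= => _ _ _;
  by case: (t == u); case: (t == v); case: (t == w).
Qed.

Lemma vertices_uvw : vertices u v w.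
Proof. by split; [exact: uF | exact: vF | exact: wF | split]. Qed.

Lemma vertices_swap12 x y z : vertices x y z -> vertices y x z.
Proof. by case=> ? ? ? [? ? ?]; split => //; split => //; rewrite eq_sym. Qed.

Lemma vertices_swap23 x y z : vertices x y z -> vertices x z y.
Proof. by case=> ? ? ? [? ? ?]; split => //; split => //; rewrite eq_sym. Qed.

Lemma vertices_third x y : x \in F -> y \in F -> x != y -> exists z, vertices x y z.
Proof.
have [vu wu wv] : [/\ v != u, w != u & w != v] by split; rewrite eq_sym.
rewrite !in_fset3 => /or3P[] /eqP-> /or3P[] /eqP-> //; rewrite ?eqxx // => _.
- by exists w; split; rewrite ?in_fset3 ?eqxx ?orbT //; split.
- by exists v; split; rewrite ?in_fset3 ?eqxx ?orbT //; split.
- by exists w; split; rewrite ?in_fset3 ?eqxx ?orbT //; split.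
- by exists u; split; rewrite ?in_fset3 ?eqxx ?orbT //; split.
- by exists v; split; rewrite ?in_fset3 ?eqxx ?orbT //; split.
- by exists u; split; rewrite ?in_fset3 ?eqxx ?orbT //; split.
Qed.

Lemma vertices_others x : x \in F -> exists y z, vertices x y z.
Proof.
move=> xF; have [y yF xy] : exists2 y, y \in F & x != y.
  move: xF; rewrite in_fset3 => /or3P[] /eqP->.
  - by exists v; rewrite ?vF.
  - by exists u; rewrite ?uF // eq_sym.
  - by exists u; rewrite ?uF // eq_sym.
by have [z xyz] := vertices_third xF yF xy; exists y, z.
Qed.

Lemma vertices_aff_indepP x y z : vertices x y z ->
  forall l1 l2 l3 : R, l1 + l2 + l3 = 0 ->
  (forall i, l1 * coord x i + l2 * coord y i + l3 * coord z i = 0) ->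
  [/\ l1 = 0, l2 = 0 & l3 = 0].
Proof.
move=> xyz; have := F_indep; rewrite (verticesE xyz).
by case: xyz => _ _ _ [xy xz yz]; apply: aff_indep3P.
Qed.

Lemma zero_subface (c : 'I_4 -> R) : (forall i, c i <= 0) ->
  is_face R F [fset x in F | dotp c x == 0] /\
  is_face R tau [fset x in F | dotp c x == 0].
Proof.
move=> c_le0; split; first by exists c, 0; split => // x _; apply: dotp_le0.
exists (fun i => cF i + c i), dF; split.
  by move=> x xt; rewrite dotpD; have := cF_le xt; have := dotp_le0 x c_le0; lra.
apply/fsetP => x; rewrite !in_fset_filter mem_F dotpD.
case xt: (x \in tau) => //=.
have := cF_le xt; have := dotp_le0 x c_le0 => cx_le0 cFx_le.
apply/andP/eqP => [[/eqP -> /eqP ->]|E]; first by rewrite addr0.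
by split; apply/eqP; lra.
Qed.

Definition ncoord (m : 'I_4) : 'I_4 -> R := fun i => - (i == m)%:R.

Lemma ncoord_le0 m i : ncoord m i <= 0.
Proof. by rewrite /ncoord oppr_le0 ler0n. Qed.

Lemma dotp_ncoord m x : dotp (ncoord m) x = - coord x m.
Proof.
rewrite /dotp (bigD1 m) //= big1 => [|i /negbTE im]; last by rewrite /ncoord im oppr0 mul0r.
by rewrite /ncoord eqxx mulN1r addr0.
Qed.

Lemma dotp_ncoord_eq0 m x : (dotp (ncoord m) x == 0) = (x m == 0%N).
Proof. by rewrite dotp_ncoord oppr_eq0 coord_eq0. Qed.

Definition ncoord2 m m' : 'I_4 -> R := fun i => ncoord m i + ncoord m' i.

Lemma ncoord2_le0 m m' i : ncoord2 m m' i <= 0.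
Proof. by rewrite /ncoord2; have := ncoord_le0 m i; have := ncoord_le0 m' i; lra. Qed.

Lemma dotp_ncoord2_eq0 m m' x :
  (dotp (ncoord2 m m') x == 0) = (x m == 0%N) && (x m' == 0%N).
Proof.
by rewrite dotpD !dotp_ncoord -opprD oppr_eq0 paddr_eq0 ?coord_ge0 // !coord_eq0.
Qed.

(* Three affinely independent points of a plane x_l = x_m = 0 inside the
   hyperplane would be collinear. *)
Lemma F_not_in_coord_plane m : m != l -> (forall x, x \in F -> x m = 0%N) -> False.
Proof.
move=> ml F_m0.
have lm : l != m by rewrite eq_sym.
have [j [k [jk jl jm kl km]]] := ord4_two_others lm.
have [lj lk mj mk] : [/\ l != j, l != k, m != j & m != k] by split; rewrite eq_sym.
have coord_F_m x : x \in F -> coord x m = 0 by move=> xF; rewrite /Defs.coord F_m0.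
have ak_neq0 : a k != 0 by apply: lt0r_neq0.
have coord_F_k x : x \in F -> coord x k = (b - a j * coord x j) / a k.
  move=> xF; rewrite -(dotp_a_F xF) /dotp (sum_ord4 _ lm lj lk mj mk jk).
  by rewrite (coord_F_l xF) (coord_F_m x xF); field.
have sum0 : (coord v j - coord w j) + (coord w j - coord u j) + (coord u j - coord v j) = 0.
  by ring.
have comb0 i : (coord v j - coord w j) * coord u i + (coord w j - coord u j) * coord v i
     + (coord u j - coord v j) * coord w i = 0.
  case/or4P: (ord4_cases i lm lj lk mj mk jk) => /eqP ->.
  - by rewrite (coord_F_l uF) (coord_F_l vF) (coord_F_l wF); ring.
  - by rewrite (coord_F_m u uF) (coord_F_m v vF) (coord_F_m w wF); ring.
  - ring.
  - by rewrite (coord_F_k u uF) (coord_F_k v vF) (coord_F_k w wF); field.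
have [_ _ /eqP] := vertices_aff_indepP vertices_uvw sum0 comb0.
rewrite subr_eq0 => /eqP uj_vj.
move/negP: uv; apply; apply/eqP/(coord_inj (R := R)) => i.
case/or4P: (ord4_cases i lm lj lk mj mk jk) => /eqP -> //.
- by rewrite (coord_F_l uF) (coord_F_l vF).
- by rewrite (coord_F_m u uF) (coord_F_m v vF).
- by rewrite (coord_F_k u uF) (coord_F_k v vF) uj_vj.
Qed.

Lemma F_no_common_zero x y m : x \in F -> y \in F -> x != y -> m != l ->
  x m = 0%N -> y m = 0%N -> False.
Proof.
move=> xF yF xy ml xm ym.
have [z xyz] := vertices_third xF yF xy.
have zm : z m != 0%N.
  apply/negP => /eqP zm; apply: (F_not_in_coord_plane ml) => t.
  by rewrite (verticesE xyz) in_fset3 => /or3P[] /eqP ->.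
have lm : l != m by rewrite eq_sym.
have [j [k [jk jl jm kl km]]] := ord4_two_others lm.
have [lj lk mj mk] : [/\ l != j, l != k, m != j & m != k] by split; rewrite eq_sym.
pose G := [fset t in F | dotp (ncoord m) t == 0].
have GE : G = fset2 x y.
  apply/fsetP => t; rewrite in_fset_filter dotp_ncoord_eq0 (verticesE xyz).
  rewrite in_fset3 in_fset2.
  case: (eqVneq t x) => [->|tx]; first by rewrite xm eqxx.
  case: (eqVneq t y) => [->|ty]; first by rewrite ym eqxx.
  by case: (eqVneq t z) => [->|tz] //=; rewrite (negbTE zm).
case: (xyz) => _ _ zF [_ xz yz].
have [G_face_F G_face_tau] := zero_subface (ncoord_le0 m).
rewrite -/G in G_face_F G_face_tau.
apply: (F_internal G_face_F).
- by rewrite GE; apply/eqP => /fsetP /(_ x); rewrite in_fset2 eqxx inE.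
- rewrite GE; apply/eqP => /fsetP /(_ z); rewrite in_fset2 zF.
  by rewrite eq_sym (negbTE xz) eq_sym (negbTE yz).
split => //; exists 1%N; rewrite GE; split; first exact: has_dim_fset2.
exists [set j; k]; split; first by rewrite cards2 jk.
move=> t; rewrite in_fset2 => /orP[] /eqP -> i; rewrite !inE negb_or => /andP[ij ik];
  have := ord4_cases i lm lj lk mj mk jk; rewrite (negbTE ij) (negbTE ik) !orbF;
  case/orP => /eqP ->; rewrite ?F_l0 //.
Qed.

Lemma F_no_double_zero x m m' : x \in F -> m != l -> m' != l -> m != m' ->
  x m = 0%N -> x m' = 0%N -> False.
Proof.
move=> xF ml m'l mm' xm xm'.
have [y [z xyz]] := vertices_others xF.
case: (xyz) => _ yF zF [xy xz yz].
have ym : y m != 0%N by apply/negP => /eqP ym; apply: (F_no_common_zero xF yF xy ml xm ym).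
have zm : z m != 0%N by apply/negP => /eqP zm; apply: (F_no_common_zero xF zF xz ml xm zm).
have [lm lm'] : l != m /\ l != m' by split; rewrite eq_sym.
have [k [kl km km']] := ord4_other lm lm' mm'.
have [lk mk m'k] : [/\ l != k, m != k & m' != k] by split; rewrite eq_sym.
pose G := [fset t in F | dotp (ncoord2 m m') t == 0].
have GE : G = [fset x].
  apply/fsetP => t; rewrite in_fset_filter dotp_ncoord2_eq0 (verticesE xyz) in_fset3 inE.
  case: (eqVneq t x) => [->|tx]; first by rewrite xm xm' eqxx.
  case: (eqVneq t y) => [->|ty]; first by rewrite (negbTE ym).
  by case: (eqVneq t z) => [->|tz] //=; rewrite (negbTE zm).
have [G_face_F G_face_tau] := zero_subface (ncoord2_le0 m m').
rewrite -/G in G_face_F G_face_tau.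
apply: (F_internal G_face_F).
- by rewrite GE; apply/eqP => /fsetP /(_ x); rewrite !inE eqxx.
- by rewrite GE; apply/eqP => /fsetP /(_ y); rewrite yF inE eq_sym (negbTE xy).
split => //; exists 0%N; rewrite GE; split; first exact: has_dim_fset1.
exists [set k]; split; first by rewrite cards1.
move=> t; rewrite inE => /eqP -> i; rewrite !inE => ik.
have := ord4_cases i lm lm' lk mm' mk m'k; rewrite (negbTE ik) !orbF.
by case/or3P => /eqP ->; rewrite ?F_l0.
Qed.

Definition e_l : pt 4 := [ffun i => nat_of_bool (i == l)].

Lemma coord_e_l i : coord e_l i = (i == l)%:R.
Proof. by rewrite /Defs.coord ffunE. Qed.

Lemma dotp_comb4 (c : 'I_4 -> R) (l1 l2 l3 l4 : R) x1 x2 x3 x4 :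
  \sum_(i < 4) c i *
      (l1 * coord x1 i + l2 * coord x2 i + l3 * coord x3 i + l4 * coord x4 i) =
  l1 * dotp c x1 + l2 * dotp c x2 + l3 * dotp c x3 + l4 * dotp c x4.
Proof. by rewrite /dotp !mulr_sumr -!big_split; apply: eq_bigr => i _ /=; ring. Qed.

(* u, v, w and e_l form a basis of R^4, and x_l = 0 together with the
   hyperplane equation makes the coordinates of q in this basis affine
   weights on u, v, w; the supporting functional cF is then dF at q. *)
Lemma tau_l0_F q : q \in tau -> q l = 0%N -> q \in F.
Proof.
move=> qt ql.
pose o0 : 'I_4 := ord0; pose o1 : 'I_4 := @Ordinal 4 1 isT.
pose o2 : 'I_4 := @Ordinal 4 2 isT; pose o3 : 'I_4 := @Ordinal 4 3 isT.
have [o01 o02 o03] : [/\ o0 != o1, o0 != o2 & o0 != o3] by [].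
have [o12 o13 o23] : [/\ o1 != o2, o1 != o3 & o2 != o3] by [].
pose M : 'M[R]_4 := \matrix_(r < 4, c < 4) coord (nth e_l [:: u; v; w; e_l] r) c.
have mulM (x : 'rV[R]_4) c : (x *m M) 0 c =
    x 0 o0 * coord u c + x 0 o1 * coord v c + x 0 o2 * coord w c + x 0 o3 * coord e_l c.
  by rewrite !mxE (sum_ord4 _ o01 o02 o03 o12 o13 o23) !mxE.
have b_neq0 : b != 0 by apply: lt0r_neq0; exact: b_gt0.
have ker0 (x : 'rV[R]_4) : x *m M = 0 -> x = 0.
  move=> xM0; have comb0 c : x 0 o0 * coord u c + x 0 o1 * coord v c +
      x 0 o2 * coord w c + x 0 o3 * coord e_l c = 0 by rewrite -mulM xM0 mxE.
  have x3 : x 0 o3 = 0.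
    have := comb0 l; rewrite (coord_F_l uF) (coord_F_l vF) (coord_F_l wF) coord_e_l eqxx.
    by rewrite !mulr0 !add0r mulr1.
  have := dotp_comb4 a (x 0 o0) (x 0 o1) (x 0 o2) (x 0 o3) u v w e_l.
  rewrite (eq_bigr (fun=> 0)) ?big1_eq => [|c _]; last by rewrite comb0 mulr0.
  rewrite (dotp_a_F uF) (dotp_a_F vF) (dotp_a_F wF) x3 mul0r addr0 => /esym/eqP.
  rewrite -!mulrDl mulf_eq0 (negbTE b_neq0) orbF => /eqP sum0.
  have [|x0 x1 x2] := vertices_aff_indepP vertices_uvw sum0.
    by move=> c; rewrite -(comb0 c) x3 mul0r addr0.
  by apply/rowP => c; rewrite [RHS]mxE;
    case/or4P: (ord4_cases c o01 o02 o03 o12 o13 o23) => /eqP ->.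
have [x Ex] := mulmx_ker0_onto ker0 (\row_c coord q c).
have q_comb c : coord q c =
    x 0 o0 * coord u c + x 0 o1 * coord v c + x 0 o2 * coord w c + x 0 o3 * coord e_l c.
  by rewrite -mulM -Ex mxE.
have x3 : x 0 o3 = 0.
  have := q_comb l; rewrite (coord_F_l uF) (coord_F_l vF) (coord_F_l wF) coord_e_l eqxx.
  by rewrite /Defs.coord ql !mulr0 !add0r mulr1.
have dotp_q (c0 : 'I_4 -> R) : dotp c0 q = \sum_(i < 4) c0 i *
    (x 0 o0 * coord u i + x 0 o1 * coord v i + x 0 o2 * coord w i + x 0 o3 * coord e_l i).
  by apply: eq_bigr => i _; rewrite q_comb.
have sum1 : x 0 o0 + x 0 o1 + x 0 o2 = 1.
  have := dotp_q a; rewrite dotp_comb4 (dotp_a_F uF) (dotp_a_F vF) (dotp_a_F wF).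
  rewrite x3 mul0r addr0 (dotp_tau qt) => e.
  have /eqP : (x 0 o0 + x 0 o1 + x 0 o2 - 1) * b = 0 by lra.
  by rewrite mulf_eq0 (negbTE b_neq0) orbF subr_eq0 => /eqP.
rewrite mem_F qt /=; apply/eqP.
rewrite dotp_q dotp_comb4 (dotp_F uF) (dotp_F vF) (dotp_F wF) x3 mul0r addr0.
by rewrite -!mulrDl sum1 mul1r.
Qed.

Lemma exists_off_F : exists2 p, p \in tau & p l != 0%N.
Proof.
apply: NNPP => no_p.
have tau_l0 t : t \in tau -> t l = 0%N.
  by move=> tt; apply/eqP/negPn/negP => tl; apply: no_p; exists t.
pose y : 'I_4 -> R := fun i => if i == l then b / a l else 0.
have al_neq0 : a l != 0 by apply: lt0r_neq0.
have : \sum_(j < 4) a j * y j = b.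
  rewrite (bigD1 l) //= big1 => [|i /negbTE il]; last by rewrite /y il mulr0.
  by rewrite /y eqxx addr0; field.
move/tau_span => [f [_ /(_ l)]].
rewrite /y eqxx big1_fset => [|t tt _]; last by rewrite /Defs.coord tau_l0 ?mulr0.
by move/eqP; rewrite mulf_eq0 invr_eq0 (negbTE (lt0r_neq0 b_gt0)) (negbTE al_neq0).
Qed.

Lemma neq_off_F p x : p \notin F -> x \in F -> x != p.
Proof. by move=> pF xF; apply: contraNneq pF => <-. Qed.

Lemma off_F_l1 p : p \in tau -> p \notin F -> p l = 1%N.
Proof.
move=> pt pF.
have pl : p l != 0%N by apply: contraNneq pF; apply: tau_l0_F.
have up := neq_off_F pF uF; have vp := neq_off_F pF vF; have wp := neq_off_F pF wF.
have sub : fset4 u v w p `<=` tau.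
  apply/fsubsetP => t; rewrite in_fset4 => /or4P[] /eqP-> //; apply: F_tau;
    [exact: uF | exact: vF | exact: wF].
have simp : simplex R (fset4 u v w p) 3.
  split; last exact: card_fset4.
  apply: aff_indep4I => // l1 l2 l3 l4 sum0 comb0.
  have l40 : l4 = 0.
    have := comb0 l; rewrite (coord_F_l uF) (coord_F_l vF) (coord_F_l wF) !mulr0 !add0r.
    by move/eqP; rewrite mulf_eq0 coord_eq0 (negbTE pl) orbF => /eqP.
  have sum0' : l1 + l2 + l3 = 0 by rewrite -sum0 l40 addr0.
  have comb0' i : l1 * coord u i + l2 * coord v i + l3 * coord w i = 0.
    by rewrite -(comb0 i) l40 mul0r addr0.
  by have [] := vertices_aff_indepP vertices_uvw sum0' comb0'.
have [_ [i [n_zero one]]] := tau_B sub simp.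
rewrite card_fset4_filter // in n_zero.
case: (eqVneq i l) => [il|il]; first by subst i; apply: one; rewrite ?in_fset4 ?eqxx ?orbT.
exfalso; move: n_zero.
case uz: (u i == 0%N); case vz: (v i == 0%N); case wz: (w i == 0%N);
  case: (p i == 0%N) => //= _.
all: first [ exact: (F_no_common_zero uF vF uv il (eqP uz) (eqP vz))
           | exact: (F_no_common_zero uF wF uw il (eqP uz) (eqP wz))
           | exact: (F_no_common_zero vF wF vw il (eqP vz) (eqP wz)) ].
Qed.

Lemma off_F_eq s t m m' : s \in tau -> t \in tau -> s l = 1%N -> t l = 1%N ->
  m != m' -> m != l -> m' != l ->
  s m = 0%N -> s m' = 0%N -> t m = 0%N -> t m' = 0%N -> s = t.
Proof.
move=> st tt sl tl mm' ml m'l sm sm' tm tm'.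
have [lm lm'] : l != m /\ l != m' by split; rewrite eq_sym.
have [k [kl km km']] := ord4_other lm lm' mm'.
have [lk mk m'k] : [/\ l != k, m != k & m' != k] by split; rewrite eq_sym.
have dotp_a x : x \in tau -> x l = 1%N -> x m = 0%N -> x m' = 0%N ->
    a l + a k * coord x k = b.
  move=> xt xl xm xm'; rewrite -(dotp_tau xt) /dotp (sum_ord4 _ lm lm' lk mm' mk m'k).
  by rewrite /Defs.coord xl xm xm'; ring.
have ak_neq0 : a k != 0 by apply: lt0r_neq0.
have sk_tk : coord s k = coord t k.
  apply: (mulfI ak_neq0).
  by have := dotp_a s st sl sm sm'; have := dotp_a t tt tl tm tm'; lra.
apply/(coord_inj (R := R)) => i.
case/or4P: (ord4_cases i lm lm' lk mm' mk m'k) => /eqP -> //;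
  by rewrite /Defs.coord ?sl ?tl ?sm ?tm ?sm' ?tm'.
Qed.

Lemma B_simplex_edge x y p q : x \in F -> y \in F -> x != y ->
  p \in tau -> q \in tau -> p \notin F -> q \notin F -> p != q ->
  aff_indep R (fset4 x y p q) ->
  exists i, [/\ i != l, p i = 0%N, q i = 0%N &
    (x i = 0%N /\ y i = 1%N) \/ (x i = 1%N /\ y i = 0%N)].
Proof.
move=> xF yF xy pt qt pF qF pq indep.
have xp := neq_off_F pF xF; have xq := neq_off_F qF xF.
have yp := neq_off_F pF yF; have yq := neq_off_F qF yF.
have sub : fset4 x y p q `<=` tau.
  by apply/fsubsetP => t; rewrite in_fset4 => /or4P[] /eqP-> //; apply: F_tau.
have simp : simplex R (fset4 x y p q) 3 by split => //; exact: card_fset4.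
have [_ [i [n_zero one]]] := tau_B sub simp.
rewrite card_fset4_filter // in n_zero.
have pl := off_F_l1 pt pF; have ql := off_F_l1 qt qF.
case: (eqVneq i l) => [il|il].
  by move: n_zero; rewrite il (F_l0 xF) (F_l0 yF) pl ql.
have not_both : ~~ ((x i == 0%N) && (y i == 0%N)).
  by apply/negP => /andP[/eqP xi /eqP yi]; exact: (F_no_common_zero xF yF xy il xi yi).
move: n_zero not_both; case xi: (x i == 0%N); case yi: (y i == 0%N);
  case pi: (p i == 0%N); case qi: (q i == 0%N) => //= _ _.
- exists i; split => //; [exact/eqP | exact/eqP | left; split; first exact/eqP].
  by apply: one; rewrite ?in_fset4 ?eqxx ?orbT ?yi.
- exists i; split => //; [exact/eqP | exact/eqP | right; split; last exact/eqP].
  by apply: one; rewrite ?in_fset4 ?eqxx ?orbT ?xi.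
Qed.

Lemma aff_indep4_or_parallel x y p q : x \in F -> y \in F -> x != y ->
  p \in tau -> q \in tau -> p \notin F -> q \notin F -> p != q ->
  aff_indep R (fset4 x y p q) \/
  exists2 t : R, t != 0 & forall i, coord p i - coord q i = t * (coord x i - coord y i).
Proof.
move=> xF yF xy pt qt pF qF pq.
case: (classic (exists2 t : R, t != 0 &
   forall i, coord p i - coord q i = t * (coord x i - coord y i))) => [|not_par];
  [by right | left].
have xp := neq_off_F pF xF; have xq := neq_off_F qF xF.
have yp := neq_off_F pF yF; have yq := neq_off_F qF yF.
apply: aff_indep4I => // l1 l2 l3 l4 sum0 comb0.
have l34 : l3 + l4 = 0.
  have := comb0 l; rewrite (coord_F_l xF) (coord_F_l yF).
  by rewrite /Defs.coord (off_F_l1 pt pF) (off_F_l1 qt qF) !mulr0 !add0r !mulr1.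
have l2E : l2 = - l1 by lra.
have l4E : l4 = - l3 by lra.
have comb_diff i : l1 * (coord x i - coord y i) + l3 * (coord p i - coord q i) = 0.
  by rewrite -(comb0 i) l2E l4E; ring.
have [l30|l3_neq0] := eqVneq l3 0.
  have [i xi_yi] := coord_neq R xy.
  have /eqP : l1 * (coord x i - coord y i) = 0 by rewrite -(comb_diff i) l30 mul0r addr0.
  by rewrite mulf_eq0 subr_eq0 (negbTE xi_yi) orbF => /eqP l10; split; lra.
exfalso; apply: not_par; exists (- l1 / l3) => [|i].
  apply: contraNneq pq => /eqP; rewrite mulf_eq0 invr_eq0 (negbTE l3_neq0) orbF.
  rewrite oppr_eq0 => /eqP l10; apply/eqP/(coord_inj (R := R)) => i.
  have /eqP := comb_diff i; rewrite l10 mul0r add0r mulf_eq0 (negbTE l3_neq0) /=.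
  by rewrite subr_eq0 => /eqP.
apply: (mulfI l3_neq0); rewrite mulrA mulrCA mulfV // mulr1 mulNr.
by apply/eqP; rewrite -addr_eq0 addrC comb_diff.
Qed.

Lemma not_parallel_two_edges x y z (d : 'I_4 -> R) t s : vertices x y z -> t != 0 ->
  (forall i, d i = t * (coord x i - coord y i)) ->
  (forall i, d i = s * (coord x i - coord z i)) -> False.
Proof.
move=> xyz t_neq0 dxy dxz.
have sum0 : (t - s) + (- t) + s = 0 by ring.
have comb0 i : (t - s) * coord x i + (- t) * coord y i + s * coord z i = 0.
  transitivity (t * (coord x i - coord y i) - s * (coord x i - coord z i)); first ring.
  by rewrite -dxy -dxz subrr.
have [_ /eqP t0 _] := vertices_aff_indepP xyz sum0 comb0.
by move: t_neq0; rewrite -oppr_eq0 t0.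
Qed.

Definition F_binary m :=
  (forall x, x \in F -> (x m <= 1)%N) /\ exists2 x, x \in F & x m = 0%N.

Lemma F_binary_one z m m' : z \in F -> F_binary m' -> m != l -> m' != l -> m != m' ->
  z m = 0%N -> z m' = 1%N.
Proof.
move=> zF [le1 _] ml m'l mm' zm; have := le1 z zF.
by case: (z m') (F_no_double_zero zF ml m'l mm' zm) => [|[|]] //= zm'0.
Qed.

Lemma common_zero_of_edges x y z p q : vertices x y z ->
  p \in tau -> q \in tau -> p \notin F -> q \notin F -> p != q ->
  aff_indep R (fset4 x y p q) -> aff_indep R (fset4 x z p q) ->
  exists i, [/\ i != l, p i = 0%N, q i = 0%N & F_binary i].
Proof.
move=> xyz pt qt pF qF pq indep_xy indep_xz.
case: (xyz) => xF yF zF [xy xz yz].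
have [i [il pi qi xy01]] := B_simplex_edge xF yF xy pt qt pF qF pq indep_xy.
have [i' [i'l pi' qi' xz01]] := B_simplex_edge xF zF xz pt qt pF qF pq indep_xz.
have [ii'|ii'] := eqVneq i i'; last first.
  case/negP: pq; apply/eqP.
  exact: (off_F_eq pt qt (off_F_l1 pt pF) (off_F_l1 qt qF) ii' il i'l pi pi' qi qi').
subst i'; exists i; split => //.
case: xy01 => [[xi0 yi1]|[xi1 yi0]].
  case: xz01 => [[_ zi1]|[xi1 _]]; last by rewrite xi0 in xi1.
  split; last by exists x.
  by move=> t; rewrite (verticesE xyz) in_fset3 => /or3P[] /eqP ->; rewrite ?xi0 ?yi1 ?zi1.
case: xz01 => [[xi0 _]|[_ zi0]]; first by rewrite xi0 in xi1.
by case: (F_no_common_zero yF zF yz il yi0 zi0).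
Qed.

Lemma common_zero p q : p \in tau -> q \in tau -> p \notin F -> q \notin F -> p != q ->
  exists i, [/\ i != l, p i = 0%N, q i = 0%N & F_binary i].
Proof.
move=> pt qt pF qF pq.
have vuw := vertices_swap12 vertices_uvw.
have wuv := vertices_swap12 (vertices_swap23 vertices_uvw).
pose d i := coord p i - coord q i.
case: (aff_indep4_or_parallel uF vF uv pt qt pF qF pq) => [indep_uv|[t1 t1_neq0 par_uv]].
- case: (aff_indep4_or_parallel uF wF uw pt qt pF qF pq) => [indep_uw|[t2 t2_neq0 par_uw]].
    exact: (common_zero_of_edges vertices_uvw pt qt pF qF pq indep_uv indep_uw).
  case: (aff_indep4_or_parallel vF wF vw pt qt pF qF pq) => [indep_vw|[t3 _ par_vw]].
    by apply: (common_zero_of_edges vuw pt qt pF qF pq) => //; rewrite fset4_swap12.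
  case: (not_parallel_two_edges (d := d) (t := - t2) (s := - t3) wuv).
  + by rewrite oppr_eq0.
  + by move=> i; rewrite /d par_uw; ring.
  + by move=> i; rewrite /d par_vw; ring.
- case: (aff_indep4_or_parallel uF wF uw pt qt pF qF pq) => [indep_uw|[t2 _ par_uw]];
    last by case: (not_parallel_two_edges vertices_uvw t1_neq0 par_uv par_uw).
  case: (aff_indep4_or_parallel vF wF vw pt qt pF qF pq) => [indep_vw|[t3 _ par_vw]].
    by apply: (common_zero_of_edges wuv pt qt pF qF pq); rewrite fset4_swap12.
  case: (not_parallel_two_edges (d := d) (t := - t1) (s := t3) vuw).
  + by rewrite oppr_eq0.
  + by move=> i; rewrite /d par_uv; ring.
  + by move=> i; rewrite /d par_vw.
Qed.

Section CrossPolytope.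
Variables (p q r : pt 4) (i j k : 'I_4).
Hypotheses (p_tau : p \in tau) (q_tau : q \in tau) (r_tau : r \in tau).
Hypotheses (pF : p \notin F) (qF : q \notin F) (rF : r \notin F).
Hypotheses (pq : p != q) (pr : p != r) (qr : q != r).
Hypotheses (ij : i != j) (ik : i != k) (jk : j != k).
Hypotheses (il : i != l) (jl : j != l) (kl : k != l).
Hypotheses (bin_i : F_binary i) (bin_j : F_binary j) (bin_k : F_binary k).
Hypotheses (pi : p i = 0%N) (pj : p j = 0%N) (qi : q i = 0%N) (qk : q k = 0%N).
Hypotheses (rj : r j = 0%N) (rk : r k = 0%N).
Variables zi zj zk : pt 4.
Hypotheses (zi_F : zi \in F) (zj_F : zj \in F) (zk_F : zk \in F).
Hypotheses (zi_i : zi i = 0%N) (zj_j : zj j = 0%N) (zk_k : zk k = 0%N).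

Lemma zi_ones : zi j = 1%N /\ zi k = 1%N.
Proof. by split; [apply: F_binary_one zi_F bin_j il jl ij zi_i
  | apply: F_binary_one zi_F bin_k il kl ik zi_i]. Qed.

Lemma zj_ones : zj i = 1%N /\ zj k = 1%N.
Proof.
have ji : j != i by rewrite eq_sym.
by split; [apply: F_binary_one zj_F bin_i jl il ji zj_j
  | apply: F_binary_one zj_F bin_k jl kl jk zj_j].
Qed.

Lemma zk_ones : zk i = 1%N /\ zk j = 1%N.
Proof.
have [ki kj] : k != i /\ k != j by split; rewrite eq_sym.
by split; [apply: F_binary_one zk_F bin_i kl il ki zk_k
  | apply: F_binary_one zk_F bin_j kl jl kj zk_k].
Qed.

Lemma p_l1 : p l = 1%N. Proof. exact: off_F_l1. Qed.
Lemma q_l1 : q l = 1%N. Proof. exact: off_F_l1. Qed.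
Lemma r_l1 : r l = 1%N. Proof. exact: off_F_l1. Qed.

Lemma dotp_ijkl (c : 'I_4 -> R) x :
  dotp c x = c i * coord x i + c j * coord x j + c k * coord x k + c l * coord x l.
Proof. exact: sum_ord4. Qed.

Lemma cross_weights : a j = a i /\ a k = a i.
Proof.
have [zij zik] := zi_ones; have [zji zjk] := zj_ones; have [zki zkj] := zk_ones.
have := dotp_a_F zi_F; have := dotp_a_F zj_F; have := dotp_a_F zk_F.
rewrite !dotp_ijkl /Defs.coord (F_l0 zi_F) (F_l0 zj_F) (F_l0 zk_F).
by rewrite zi_i zij zik zji zj_j zjk zki zkj zk_k /= => *; split; lra.
Qed.

Lemma off_F_coords : coord q j = coord p k /\ coord r i = coord p k.
Proof.
have [aj ak] := cross_weights; have ai_neq0 : a i != 0 by apply: lt0r_neq0.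
have := dotp_tau p_tau; have := dotp_tau q_tau; have := dotp_tau r_tau.
rewrite !dotp_ijkl aj ak /Defs.coord p_l1 q_l1 r_l1 pi pj qi qk rj rk /= => er eq ep.
by split; apply: (mulfI ai_neq0); lra.
Qed.

Lemma coord_p_k_neq0 : coord p k != 0.
Proof.
rewrite coord_eq0; apply: contraNneq pq => pk; apply/eqP.
exact: (off_F_eq p_tau q_tau p_l1 q_l1 ik il kl pi pk qi qk).
Qed.

(* The B-simplex {zi, p, q, r} can only use the coordinate i, which forces
   r_i = 1; the common value of p_k, q_j, r_i is therefore 1. *)
Lemma off_F_ones : [/\ p k = 1%N, q j = 1%N & r i = 1%N].
Proof.
have [qj_pk ri_pk] := off_F_coords.
have pk_neq0 : (p k)%:R != 0 :> R := coord_p_k_neq0.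
have [zij zik] := zi_ones.
have zip := neq_off_F pF zi_F; have ziq := neq_off_F qF zi_F.
have zir := neq_off_F rF zi_F.
have sub : fset4 zi p q r `<=` tau.
  by apply/fsubsetP => t; rewrite in_fset4 => /or4P[] /eqP-> //; exact: F_tau.
have simp : simplex R (fset4 zi p q r) 3.
  split; last exact: card_fset4.
  apply: aff_indep4I => // l1 l2 l3 l4 sum0 comb0.
  have := comb0 i; have := comb0 j; have := comb0 k; have := comb0 l.
  rewrite ri_pk qj_pk /Defs.coord zi_i zij zik (F_l0 zi_F) p_l1 q_l1 r_l1.
  rewrite pi pj qi qk rj rk /= !mulr0 !addr0 !add0r !mulr1 => el ek ej ei.
  have l40 : l4 = 0.
    by move/eqP: ei; rewrite mulf_eq0 (negbTE pk_neq0) orbF => /eqP.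
  have l10 : l1 = 0 by lra.
  move: ek ej; rewrite l10 !add0r => /eqP + /eqP.
  by rewrite !mulf_eq0 (negbTE pk_neq0) !orbF => /eqP l20 /eqP l30.
have [_ [m [n_zero one]]] := tau_B sub simp.
rewrite card_fset4_filter // in n_zero.
have ri1 : r i = 1%N.
  case/or4P: (ord4_cases m ij ik il jk jl kl) => /eqP em; subst m.
  - by apply: one; rewrite ?in_fset4 ?eqxx ?orbT // -(coord_eq0 R) ri_pk.
  - by move: n_zero; rewrite zij pj rj -(coord_eq0 R) qj_pk (negbTE pk_neq0).
  - by move: n_zero; rewrite zik qk rk -(coord_eq0 R p) (negbTE pk_neq0).
  - by move: n_zero; rewrite (F_l0 zi_F) p_l1 q_l1 r_l1.
have pk1 : coord p k = 1 by rewrite -ri_pk (coord_nat _ ri1).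
by split => //; apply: (eq_coord_nat (R := R)); rewrite ?qj_pk pk1.
Qed.

Lemma off_F_cases t : t \in tau -> t \notin F -> [|| t == p, t == q | t == r].
Proof.
move=> t_tau tF; apply/negPn/negP; rewrite !negb_or => /and3P[tp tq tr].
have [pk qj ri] := off_F_ones; have tl := off_F_l1 t_tau tF.
have [m1 [m1l t1 p1 _]] := common_zero t_tau p_tau tF pF tp.
have [m2 [m2l t2 q2 _]] := common_zero t_tau q_tau tF qF tq.
have [m3 [m3l t3 r3 _]] := common_zero t_tau r_tau tF rF tr.
have eq_t s m m' : s \in tau -> s l = 1%N -> m != m' -> m != l -> m' != l ->
    t m = 0%N -> t m' = 0%N -> s m = 0%N -> s m' = 0%N -> t == s.
  move=> s_tau sl mm' ml m'l tm tm' sm sm'; apply/eqP.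
  exact: off_F_eq t_tau s_tau tl sl mm' ml m'l tm tm' sm sm'.
case/or4P: (ord4_cases m1 ij ik il jk jl kl) => /eqP e1; subst m1;
  rewrite ?pk ?p_l1 // in p1.
- case/or4P: (ord4_cases m3 ij ik il jk jl kl) => /eqP e3; subst m3;
    rewrite ?ri ?r_l1 // in r3.
  + by case/negP: tp; apply: (eq_t p i j p_tau p_l1 ij il jl t1 t3 pi pj).
  + by case/negP: tq; apply: (eq_t q i k q_tau q_l1 ik il kl t1 t3 qi qk).
- case/or4P: (ord4_cases m2 ij ik il jk jl kl) => /eqP e2; subst m2;
    rewrite ?qj ?q_l1 // in q2.
  + by case/negP: tp; apply: (eq_t p i j p_tau p_l1 ij il jl t2 t1 pi pj).
  + by case/negP: tr; apply: (eq_t r j k r_tau r_l1 jk jl kl t1 t2 rj rk).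
Qed.

Lemma tau_cross_polytope : tau = cross_polytope.
Proof.
have [pk qj ri] := off_F_ones.
have [zij zik] := zi_ones; have [zji zjk] := zj_ones; have [zki zkj] := zk_ones.
have zizj : zi != zj by apply/eqP => e; move: zij; rewrite e zj_j.
have zizk : zi != zk by apply/eqP => e; move: zik; rewrite e zk_k.
have zjzk : zj != zk by apply/eqP => e; move: zjk; rewrite e zk_k.
have zs : vertices zi zj zk by [].
have cross := mem_cross_polytope ij ik il jk jl kl.
have tau_sub : tau `<=` cross_polytope.
  apply/fsubsetP => t t_tau; have [tF|tF] := boolP (t \in F).
    move: tF; rewrite (verticesE zs) in_fset3 => /or3P[] /eqP ->; apply: cross;
    by rewrite ?(F_l0 zi_F) ?(F_l0 zj_F) ?(F_l0 zk_F)
      ?zi_i ?zij ?zik ?zji ?zj_j ?zjk ?zki ?zkj ?zk_k.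
  case/or3P: (off_F_cases t_tau tF) => /eqP ->; apply: cross;
    by rewrite ?pi ?pj ?pk ?p_l1 ?qi ?qj ?qk ?q_l1 ?ri ?rj ?rk ?r_l1.
pose X := zi |` (zj |` (zk |` (p |` (q |` [fset r])))).
have X_sub : X `<=` tau.
  apply/fsubsetP => t; rewrite !inE.
  by case/or4P => [/eqP->|/eqP->|/eqP->|/orP[/eqP->|/orP[/eqP->|/eqP->]]] //; exact: F_tau.
have [zip zjp zkp] : [/\ zi != p, zj != p & zk != p] by split; apply: neq_off_F.
have [ziq zjq zkq] : [/\ zi != q, zj != q & zk != q] by split; apply: neq_off_F.
have [zir zjr zkr] : [/\ zi != r, zj != r & zk != r] by split; apply: neq_off_F.
have card_X : #|` X| = 6%N.
  rewrite /X !cardfsU1 cardfs1 !inE !negb_or zizj zizk zjzk.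
  by rewrite zip zjp zkp ziq zjq zkq zir zjr zkr pq pr qr.
apply/eqP; rewrite eqEfcard tau_sub /=.
by rewrite (leq_trans card_cross_polytope) // -card_X fsubset_leq_card.
Qed.

End CrossPolytope.

Lemma internal_triangle_facet : B1_facet tau \/ B2_facet tau \/ tau = cross_polytope.
Proof.
have [p p_tau pl] := exists_off_F.
have pF : p \notin F by apply: contra pl => /F_l0 ->.
case: (classic (exists2 q, q \in tau & (q \notin F) && (q != p))) =>
    [[q q_tau /andP[qF qp]]|no_q]; last first.
  left; exists l, p => //; split; first exact: off_F_l1.
  move=> x x_tau xp; apply: F_l0; apply: contraT => xF.
  by case: no_q; exists x; rewrite // xF xp.
have pq : p != q by rewrite eq_sym.
have [i [il pi qi bin_i]] := common_zero p_tau q_tau pF qF pq.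
case: (classic (exists2 r, r \in tau & (r \notin F) && (r i != 0%N))) =>
    [[r r_tau /andP[rF ri]]|no_r]; last first.
  right; left; exists i, l; split => // x x_tau.
  have [xF|xF] := boolP (x \in F).
    by rewrite (F_l0 xF); case: (x i) (bin_i.1 x xF) => [|[|]] //= _; rewrite !inE.
  have -> : x i = 0%N.
    by apply/eqP; apply: contraT => xi; case: no_r; exists x; rewrite // xF.
  by rewrite (off_F_l1 x_tau xF) !inE.
right; right.
have pr : p != r by apply: contraTneq ri => <-; rewrite pi.
have qr : q != r by apply: contraTneq ri => <-; rewrite qi.
have [j [jl pj rj bin_j]] := common_zero p_tau r_tau pF rF pr.
have [k [kl qk rk bin_k]] := common_zero q_tau r_tau qF rF qr.
have ij : i != j by apply: contraTneq ri => ->; rewrite rj.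
have ik : i != k by apply: contraTneq ri => ->; rewrite rk.
have jk : j != k.
  apply/eqP => jk; subst k; case/negP: pq; apply/eqP.
  exact: off_F_eq p_tau q_tau (off_F_l1 p_tau pF) (off_F_l1 q_tau qF) ij il jl pi pj qi qk.
have [zi zi_F zi_i] := bin_i.2; have [zj zj_F zj_j] := bin_j.2.
have [zk zk_F zk_k] := bin_k.2.
exact: (tau_cross_polytope p_tau q_tau r_tau pF qF rF pq pr qr ij ik jk il jl kl
  bin_i bin_j bin_k pi pj qi qk rj rk zi_F zj_F zk_F zi_i zj_j zk_k).
Qed.

End InternalTriangle.

Local Close Scope ring_scope.

Theorem lemma2p7 (R : realType) (tau : {fset pt 4}) :
  B_facet R tau ->
  (exists F : {fset pt 4},
      is_internal_Vface R tau F /\ #|` F| = 3 /\ aff_indep R F) ->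
  B1_facet tau \/ B2_facet tau \/ tau = cross_polytope.
Proof.
move=> [[a [b [a_gt0 tau_span]]] tau_B].
move=> [F [[[[cF [dF [cF_le F_eq]]] [k [dimF [J [card_J F_J]]]]] F_internal]]].
move=> [card_F F_indep].
have k2 : k = 2%N.
  case: dimF => [[B B_F [_ card_B]] dim_le].
  have := dim_le _ (fsubset_refl _) F_indep; have := fsubset_leq_card B_F.
  by rewrite card_B card_F; case: k {card_J dim_le card_B} => [|[|[|]]].
have [l] : exists l, l \in ~: J.
  apply/card_gt0P; rewrite -(ltn_add2l 3).
  by move: (cardsC J); rewrite card_J k2 card_ord => ->.
rewrite inE => lJ.
have [u [v [w [EF uv uw vw]]]] := fset3_of_card3 card_F.
rewrite {}EF in F_eq F_J F_internal F_indep.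
exact: (internal_triangle_facet a_gt0 tau_span tau_B uv uw vw cF_le F_eq
  (fun x xF => F_J x xF l lJ) F_indep F_internal).
Qed.
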